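(* Let $G$ be a connected graph, $Q$ a clique separator of $G$, and $\mathcal D$ the $Q$-skeleton of $G$. If ${\rm Upper}_Q$ contains no full antipodal triple, then $\mathcal D$ is a partition of $\Gamma_Q$, i.e. its members are pairwise disjoint and their union is $\Gamma_Q$.
   Context: Graphs are finite and simple. A clique is an inclusion-maximal set of pairwise adjacent vertices. A clique $Q$ of $G$ is a clique separator if $G-Q$ has at least two connected components; if their vertex sets are $V_1,\dots,V_s$, put $\gamma_i=G[V_i\cup Q]$ and $\Gamma_Q=\{\gamma_1,\dots,\gamma_s\}$. A relevant clique of $\gamma\in\Gamma_Q$ is a clique $K$ of the graph $\gamma$ with $K\cap Q\neq\emptyset$ and $K\neq Q$. An element $\gamma\in\Gamma_Q$ is a neighboring subgraph of a vertex $v$ if $v$ belongs to some relevant clique of $\gamma$; a set $W\subseteq\Gamma_Q$ is neighboring if there is $v\in Q$ such that every member of $W$ is a neighboring subgraph of $v$; a neighboring triple is a neighboring set of three elements. Relations on $\Gamma_Q$: attachedness $\gamma\bowtie\gamma'$ iff there are relevant cliques $K$ of $\gamma$ and $K'$ of $\gamma'$ with $K\cap K'\cap Q\neq\emptyset$; dominance $\gamma\le\gamma'$ iff $\gamma\bowtie\gamma'$ and, for each relevant clique $K'$ of $\gamma'$, either $K\cap Q\subseteq K'\cap Q$ for every relevant clique $K$ of $\gamma$, or $K\cap K'\cap Q=\emptyset$ for every relevant clique $K$ of $\gamma$; antipodality $\gamma\leftrightarrow\gamma'$ iff there are relevant cliques $K$ of $\gamma$ and $K'$ of $\gamma'$ with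 $K\cap K'\cap Q\neq\emptyset$ and $K\cap Q$, $K'\cap Q$ inclusion-wise incomparable. Dominance is a preorder; by standing convention, elements $\gamma,\gamma'$ with $\gamma\le\gamma'$ and $\gamma'\le\gamma$ are identified (attachedness, antipodality and being neighboring are compatible with this identification), so $(\Gamma_Q,\le)$ is a partial order. A full antipodal triple is a neighboring triple whose elements are pairwise antipodal. ${\rm Upper}_Q$ is the set of maximal elements of $(\Gamma_Q,\le)$, $\ell=|{\rm Upper}_Q|$, and $(u_1,\dots,u_\ell)$ is a fixed ordering of ${\rm Upper}_Q$. For $i\in[\ell]$, $D_i=\{\gamma\in\Gamma_Q:\gamma\le u_i \text{ and } \gamma\not\le u_j \ \forall j\in[\ell]\setminus\{i\}\}$; for $i<j$ in $[\ell]$, $D_{i,j}=\{\gamma\in\Gamma_Q:\gamma\le u_i,\ \gamma\le u_j \text{ and } \gamma\not\le u_k\ \forall k\in[\ell]\setminus\{i,j\}\}$. The $Q$-skeleton is $\mathcal D=\{D_i: i\in[\ell]\}\cup\{D_{i,j}: i,j\in[\ell], i<j\}$. *)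

From mathcomp Require Import all_boot.
Set Implicit Arguments. Unset Strict Implicit. Unset Printing Implicit Defensive.

Section CliqueSep.
Variables (T : finType) (e : rel T).

Definition simple_graph := symmetric e /\ irreflexive e.

Definition connected_graph := forall x y : T, connect e x y.

(* K is a clique (inclusion-maximal set of pairwise adjacent vertices)
   of the induced subgraph G[S] *)
Definition clique_in (S K : {set T}) : Prop :=
  K \subset S /\
  (forall x y, x \in K -> y \in K -> x != y -> e x y) /\
  (forall x, x \in S -> x \notin K -> exists2 y, y \in K & ~~ e x y).

Definition clique (K : {set T}) : Prop := clique_in [set: T] K.

Definition rel_minus (Q : {set T}) : rel T :=
  [rel x y | [&& e x y, x \notin Q & y \notin Q]].

Definition component (Q C : {set T}) : Prop :=
  exists2 x, x \notin Q & C = [set y | (y \notin Q) && connect (rel_minus Q) x y].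

Definition clique_separator (Q : {set T}) : Prop :=
  clique Q /\ exists C1 C2, [/\ component Q C1, component Q C2 & C1 != C2].

(* An element gamma = G[C :|: Q] of Gamma_Q is represented by its component C.
   Relevant clique of gamma. *)
Definition relevant (Q C K : {set T}) : Prop :=
  [/\ clique_in (C :|: Q) K, K :&: Q != set0 & K != Q].

Definition neighboring (Q C : {set T}) (v : T) : Prop :=
  exists2 K, relevant Q C K & v \in K.

Definition attached (Q C C' : {set T}) : Prop :=
  exists K K', [/\ relevant Q C K, relevant Q C' K' & K :&: K' :&: Q != set0].

Definition dominated (Q C C' : {set T}) : Prop :=
  attached Q C C' /\
  forall K', relevant Q C' K' ->
    (forall K, relevant Q C K -> K :&: Q \subset K' :&: Q) \/
    (forall K, relevant Q C K -> K :&: K' :&: Q = set0).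

Definition antipodal (Q C C' : {set T}) : Prop :=
  exists K K', [/\ relevant Q C K, relevant Q C' K', K :&: K' :&: Q != set0,
                   ~~ (K :&: Q \subset K' :&: Q) & ~~ (K' :&: Q \subset K :&: Q)].

Definition equiv_dom (Q C C' : {set T}) : Prop :=
  dominated Q C C' /\ dominated Q C' C.

(* maximal elements of (Gamma_Q, <=), i.e. (representatives of) Upper_Q *)
Definition upper (Q C : {set T}) : Prop :=
  component Q C /\ forall C', component Q C' -> dominated Q C C' -> dominated Q C' C.

(* Upper_Q contains no full antipodal triple: no three (pairwise distinct,
   i.e. pairwise non-identified) elements of Upper_Q forming a neighboring
   triple whose elements are pairwise antipodal. *)
Definition no_full_antipodal_triple_in_upper (Q : {set T}) : Prop :=
  forall A B C, upper Q A -> upper Q B -> upper Q C ->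
    ~ equiv_dom Q A B -> ~ equiv_dom Q B C -> ~ equiv_dom Q A C ->
    ~ ((exists2 v, v \in Q & [/\ neighboring Q A v, neighboring Q B v & neighboring Q C v])
       /\ antipodal Q A B /\ antipodal Q B C /\ antipodal Q A C).

(* us = (u_1, ..., u_l) is an ordering of Upper_Q (one representative per
   identified class); indices are 0-based. *)
Definition upper_ordering (Q : {set T}) (us : seq {set T}) : Prop :=
  (forall i, i < size us -> upper Q (nth set0 us i)) /\
  (forall i j, i < size us -> j < size us -> i != j ->
      ~ equiv_dom Q (nth set0 us i) (nth set0 us j)) /\
  (forall C, upper Q C -> exists2 i, i < size us & equiv_dom Q C (nth set0 us i)).

Definition in_D1 (Q : {set T}) (us : seq {set T}) (i : nat) (C : {set T}) : Prop :=
  [/\ i < size us, dominated Q C (nth set0 us i) &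
      forall j, j < size us -> j != i -> ~ dominated Q C (nth set0 us j)].

Definition in_D2 (Q : {set T}) (us : seq {set T}) (i j : nat) (C : {set T}) : Prop :=
  [/\ i < j < size us, dominated Q C (nth set0 us i), dominated Q C (nth set0 us j) &
      forall k, k < size us -> k != i -> k != j -> ~ dominated Q C (nth set0 us k)].

Definition skeleton_partition (Q : {set T}) (us : seq {set T}) : Prop :=
  (forall C, component Q C ->
     (exists i, in_D1 Q us i C) \/ (exists i j, in_D2 Q us i j C)) /\
  (forall C i i', i != i' -> ~ (in_D1 Q us i C /\ in_D1 Q us i' C)) /\
  (forall C i j k, ~ (in_D1 Q us i C /\ in_D2 Q us j k C)) /\
  (forall C i j i' j', (i, j) != (i', j') -> ~ (in_D2 Q us i j C /\ in_D2 Q us i' j' C)).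

End CliqueSep.

From mathcomp Require Import all_boot boolp zify.
Set Implicit Arguments. Unset Strict Implicit. Unset Printing Implicit Defensive.

(* Dominance is transitive, so in the finite preorder Gamma_Q every gamma lies
   below a maximal element, hence below some u_i: the skeleton covers Gamma_Q.
   Being identified with some u_i forces all relevant cliques of an element of
   Upper_Q to have one and the same trace on Q.  Hence if relevant cliques of two
   non-identified elements of Upper_Q share a vertex of Q, an inclusion of their
   traces would make one dominate the other: they are antipodal.  If gamma lay
   below three distinct u_i, a vertex of Q in a relevant clique of gamma would lie
   in relevant cliques of all three, a full antipodal triple.  So gamma lies below
   one or two u_i, and the members of the skeleton are disjoint by definition. *)

Section FinitePreorder.
Variables (X : finType) (P : X -> Prop) (R : X -> X -> Prop).
Hypothesis R_trans : forall x y z, R x y -> R y z -> R x z.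

Lemma exists_maximal_above x : P x ->
  exists2 y, x = y \/ R x y & P y /\ forall z, P z -> R y z -> R z y.
Proof.
pose above x := [set z | `[< P z /\ R x z /\ ~ R z x >]].
elim: #|above x|.+1 {-2}x (ltnSn #|above x|) => // n IHn {}x above_x Px.
have [x_max | /existsNP[z /not_implyP[Pz /not_implyP[Rxz nRzx]]]] :=
  pselect (forall z, P z -> R x z -> R z x).
  by exists x; [left|].
suff /proper_card lt_above : above z \proper above x.
  have [y zy y_max] := IHn z (leq_trans lt_above above_x) Pz.
  by exists y => //; right; case: zy => [<-|/(R_trans Rxz)].
apply/properP; split.
  apply/subsetP => w; rewrite !inE => /asboolP[Pw [Rzw nRwz]].
  apply/asboolP; split=> //; split; first exact: R_trans Rxz Rzw.
  by move=> /(R_trans Rzw).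
by exists z; rewrite !inE; apply/asboolP => //; case=> _ [].
Qed.

End FinitePreorder.

Section Dominance.
Variables (T : finType) (e : rel T) (Q : {set T}).

Definition uniform_trace (C : {set T}) : Prop :=
  forall K1 K2, relevant e Q C K1 -> relevant e Q C K2 -> K1 :&: Q \subset K2 :&: Q.

Lemma relevant_meets_sep (C K : {set T}) : relevant e Q C K -> exists2 v, v \in K & v \in Q.
Proof. by case=> _ /set0Pn[v]; rewrite inE => /andP[]; exists v. Qed.

Lemma dominated_trace_sub (C D : {set T}) : dominated e Q C D ->
  exists2 K', relevant e Q D K' & forall K, relevant e Q C K -> K :&: Q \subset K' :&: Q.
Proof.
case=> [[K [K' [rK rK' KK'Q]]] dom_CD]; exists K' => //.
have [//|disj] := dom_CD K' rK'.
by rewrite disj ?eqxx in KK'Q.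
Qed.

Lemma neighboring_dominated (C D : {set T}) v :
  dominated e Q C D -> neighboring e Q C v -> v \in Q -> neighboring e Q D v.
Proof.
move=> /dominated_trace_sub[K' rK' sub] [K rK vK] vQ; exists K' => //.
have /setIP[] // : v \in K' :&: Q by apply: (subsetP (sub K rK)); rewrite inE vK vQ.
Qed.

Lemma dominated_sep_neighbor (C D : {set T}) :
  dominated e Q C D -> exists2 v, v \in Q & neighboring e Q C v.
Proof.
case=> [[K [_ [rK _ _]]] _]; have [v vK vQ] := relevant_meets_sep rK.
by exists v => //; exists K.
Qed.

Lemma dominated_trans (C D E : {set T}) :
  dominated e Q C D -> dominated e Q D E -> dominated e Q C E.
Proof.
move=> dom_CD dom_DE; have [K' rK' subCD] := dominated_trace_sub dom_CD.
split.
  have [v vQ [K rK vK]] := dominated_sep_neighbor dom_CD.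
  have nD : neighboring e Q D v by apply: neighboring_dominated dom_CD _ vQ; exists K.
  have [K'' rK'' vK''] := neighboring_dominated dom_DE nD vQ.
  by exists K, K''; split => //; apply/set0Pn; exists v; rewrite !inE vK vK'' vQ.
move=> K'' rK''; case: dom_DE => _ /(_ K'' rK'') [sub | disj]; [left | right] => K rK.
  exact: subset_trans (subCD K rK) (sub K' rK').
apply/setP => v; rewrite !inE; apply/negbTE/negP => /andP[/andP[vK vK''] vQ].
have /setIP[vK' _] : v \in K' :&: Q by apply: (subsetP (subCD K rK)); rewrite inE vK vQ.
by have /setP/(_ v) := disj K' rK'; rewrite !inE vK' vK'' vQ.
Qed.

Lemma equiv_dom_uniform_trace (C D : {set T}) : equiv_dom e Q C D -> uniform_trace C.
Proof.
move=> [dom_CD [_ dom_DC]] K1 K2 rK1 rK2.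
have [K' rK' subCD] := dominated_trace_sub dom_CD.
have [sub | disj] := dom_DC K2 rK2; first exact: subset_trans (subCD K1 rK1) (sub K' rK').
have [v vK2 vQ] := relevant_meets_sep rK2.
have /setIP[vK' _] : v \in K' :&: Q by apply: (subsetP (subCD K2 rK2)); rewrite inE vK2 vQ.
by have /setP/(_ v) := disj K' rK'; rewrite !inE vK' vK2 vQ.
Qed.

Lemma dominated_of_trace_sub (C D K L : {set T}) :
  uniform_trace C -> uniform_trace D -> relevant e Q C K -> relevant e Q D L ->
  K :&: L :&: Q != set0 -> K :&: Q \subset L :&: Q -> dominated e Q C D.
Proof.
move=> unifC unifD rK rL KLQ subKL; split; first by exists K, L.
move=> L' rL'; left => K' rK'.
exact: subset_trans (unifC _ _ rK' rK) (subset_trans subKL (unifD _ _ rL rL')).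
Qed.

Lemma upper_dominated_equiv (C D : {set T}) :
  upper e Q C -> component e Q D -> dominated e Q C D -> equiv_dom e Q C D.
Proof. by move=> [_ C_max] compD dom_CD; split; last exact: C_max. Qed.

Lemma upper_trace_not_sub (C D K L : {set T}) :
  upper e Q C -> upper e Q D -> uniform_trace C -> uniform_trace D -> ~ equiv_dom e Q C D ->
  relevant e Q C K -> relevant e Q D L -> K :&: L :&: Q != set0 -> ~~ (K :&: Q \subset L :&: Q).
Proof.
move=> upC [compD _] unifC unifD nCD rK rL KLQ; apply/negP => subKL.
by apply/nCD/upper_dominated_equiv => //; apply: dominated_of_trace_sub rK rL _ _.
Qed.

Lemma upper_antipodal (C D : {set T}) v :
  upper e Q C -> upper e Q D -> uniform_trace C -> uniform_trace D -> ~ equiv_dom e Q C D ->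
  v \in Q -> neighboring e Q C v -> neighboring e Q D v -> antipodal e Q C D.
Proof.
move=> upC upD unifC unifD nCD vQ [K rK vK] [L rL vL].
have KLQ : K :&: L :&: Q != set0 by apply/set0Pn; exists v; rewrite !inE vK vL vQ.
exists K, L; split => //; first exact: upper_trace_not_sub rK rL KLQ.
apply: (upper_trace_not_sub upD upC unifD unifC _ rL rK); first by case=> ? ?; apply: nCD.
by rewrite [L :&: K]setIC.
Qed.

Lemma full_antipodal_triple_of_dominated (C A B D : {set T}) :
  upper e Q A -> upper e Q B -> upper e Q D ->
  uniform_trace A -> uniform_trace B -> uniform_trace D ->
  ~ equiv_dom e Q A B -> ~ equiv_dom e Q B D -> ~ equiv_dom e Q A D ->
  dominated e Q C A -> dominated e Q C B -> dominated e Q C D ->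
  (exists2 v, v \in Q & [/\ neighboring e Q A v, neighboring e Q B v & neighboring e Q D v])
  /\ antipodal e Q A B /\ antipodal e Q B D /\ antipodal e Q A D.
Proof.
move=> upA upB upD unifA unifB unifD nAB nBD nAD domA domB domD.
have [v vQ nCv] := dominated_sep_neighbor domA.
have nAv := neighboring_dominated domA nCv vQ.
have nBv := neighboring_dominated domB nCv vQ.
have nDv := neighboring_dominated domD nCv vQ.
split; first by exists v.
by split; [|split]; apply: upper_antipodal vQ _ _.
Qed.

End Dominance.

Section Skeleton.
Variables (T : finType) (e : rel T) (Q : {set T}) (us : seq {set T}).
Local Notation u i := (nth set0 us i).

Lemma in_D1_dominated_index C i k :
  in_D1 e Q us i C -> k < size us -> dominated e Q C (u k) -> k = i.
Proof. by case=> _ _ others lk dk; apply/eqP/contraT => nki; case: (others k lk nki dk). Qed.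

Lemma in_D2_dominated_index C i j k :
  in_D2 e Q us i j C -> k < size us -> dominated e Q C (u k) -> (k == i) || (k == j).
Proof.
by case=> _ _ _ others lk dk; apply/contraT => /norP[nki nkj]; case: (others k lk nki nkj dk).
Qed.

Lemma in_D1_inj C i i' : in_D1 e Q us i C -> in_D1 e Q us i' C -> i = i'.
Proof. by move=> D1i [li' di' _]; apply/esym/(in_D1_dominated_index D1i). Qed.

Lemma in_D1_in_D2 C i j k : in_D1 e Q us i C -> ~ in_D2 e Q us j k C.
Proof.
move=> D1i [/andP[ltjk lk] dj dk _].
have ji := in_D1_dominated_index D1i (ltn_trans ltjk lk) dj.
by rewrite ji (in_D1_dominated_index D1i lk dk) ltnn in ltjk.
Qed.

Lemma in_D2_inj C i j i' j' :
  in_D2 e Q us i j C -> in_D2 e Q us i' j' C -> (i, j) = (i', j').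
Proof.
move=> D2ij D2ij'; case: (D2ij) (D2ij') => /andP[ltij lj] di dj _ [/andP[ltij' lj'] di' dj' _].
have i'_ij := in_D2_dominated_index D2ij (ltn_trans ltij' lj') di'.
have j'_ij := in_D2_dominated_index D2ij lj' dj'.
have i_i'j' := in_D2_dominated_index D2ij' (ltn_trans ltij lj) di.
have j_i'j' := in_D2_dominated_index D2ij' lj dj.
by congr pair; lia.
Qed.

Lemma in_D_cover C :
  (exists2 i, i < size us & dominated e Q C (u i)) ->
  (forall a b k, a < b -> b < size us -> k < size us -> k != a -> k != b ->
     dominated e Q C (u a) -> dominated e Q C (u b) -> ~ dominated e Q C (u k)) ->
  (exists i, in_D1 e Q us i C) \/ (exists i j, in_D2 e Q us i j C).
Proof.
move=> [i li di] at_most_two.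
have [alone | /existsNP[j /not_implyP[lj /not_implyP[nji /contrapT dj]]]] :=
  pselect (forall j, j < size us -> j != i -> ~ dominated e Q C (u j)).
  by left; exists i.
right; case: (ltngtP i j) => [ltij | ltji | eij]; last by rewrite eij eqxx in nji.
- exists i, j; split; rewrite ?ltij // => k lk nki nkj.
  exact: at_most_two ltij lj lk nki nkj di dj.
- exists j, i; split; rewrite ?ltji // => k lk nkj nki.
  exact: at_most_two ltji li lk nkj nki dj di.
Qed.

End Skeleton.

Section UpperOrdering.
Variables (T : finType) (e : rel T) (Q : {set T}) (us : seq {set T}).
Hypothesis ord_us : upper_ordering e Q us.
Local Notation u i := (nth set0 us i).

Lemma upper_ordering_uniform_trace i : i < size us -> uniform_trace e Q (u i).
Proof.
move=> li; have [j _ equiv_ij] := ord_us.2.2 _ (ord_us.1 i li).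
exact: equiv_dom_uniform_trace equiv_ij.
Qed.

Lemma upper_ordering_dominates C :
  component e Q C -> exists2 i, i < size us & dominated e Q C (u i).
Proof.
move=> compC; have [D CD upD] := exists_maximal_above (@dominated_trans T e Q) compC.
have [i li [dDi _]] := ord_us.2.2 D upD.
by exists i => //; case: CD => [-> // | /dominated_trans]; apply.
Qed.

Lemma upper_ordering_at_most_two C a b k :
  no_full_antipodal_triple_in_upper e Q ->
  a < b -> b < size us -> k < size us -> k != a -> k != b ->
  dominated e Q C (u a) -> dominated e Q C (u b) -> ~ dominated e Q C (u k).
Proof.
move=> no_triple ltab lb lk nka nkb da db dk.
have la := ltn_trans ltab lb.
have [up [distinct _]] := ord_us; have unif := upper_ordering_uniform_trace.
have nab := distinct a b la lb (negbT (ltn_eqF ltab)).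
have nbk : ~ equiv_dom e Q (u b) (u k) by apply: (distinct b k); rewrite // eq_sym.
have nak : ~ equiv_dom e Q (u a) (u k) by apply: (distinct a k); rewrite // eq_sym.
apply: (no_triple _ _ _ (up a la) (up b lb) (up k lk) nab nbk nak).
exact: full_antipodal_triple_of_dominated (up a la) (up b lb) (up k lk)
  (unif a la) (unif b lb) (unif k lk) nab nbk nak da db dk.
Qed.

End UpperOrdering.

Theorem lemma3p1 (T : finType) (e : rel T) (Q : {set T}) (us : seq {set T}) :
  simple_graph e -> connected_graph e -> clique_separator e Q ->
  upper_ordering e Q us ->
  no_full_antipodal_triple_in_upper e Q ->
  skeleton_partition e Q us.
Proof.
move=> _ _ _ ord_us no_triple; split.
  move=> C compC; apply: in_D_cover; first exact: upper_ordering_dominates.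
  by move=> a b k; apply: upper_ordering_at_most_two.
split; first by move=> C i i' nii' [D1i D1i']; rewrite (in_D1_inj D1i D1i') eqxx in nii'.
split; first by move=> C i j k [D1i D2jk]; apply: in_D1_in_D2 D1i D2jk.
by move=> C i j i' j' neq [D2 D2']; rewrite (in_D2_inj D2 D2') eqxx in neq.
Qed.
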